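(* Let $\psi\in\mathbb{R}[x]$ and suppose $\psi=\psi^{(1)}\psi^{(2)}$ with $\psi^{(1)},\psi^{(2)}\in\mathbb{R}[x]$ non-constant. If the Fischer operator $F_\psi$ is surjective, then $\psi^{(1)}$ and $\psi^{(2)}$ are harmonic divisors.
   Context: $\mathbb{R}[x]$ denotes the real polynomials in $d$ variables, $\Delta$ the Laplacian, and $F_\psi:\mathbb{R}[x]\to\mathbb{R}[x]$, $F_\psi(q)=\Delta(\psi q)$. A polynomial $f$ is a harmonic divisor if there exists a non-zero polynomial $q$ such that $fq$ is harmonic. *)

From mathcomp Require Import all_boot all_algebra.
From mathcomp Require Import Rstruct.
From mathcomp Require Import mpoly.
From Stdlib Require Import Reals.
Set Implicit Arguments. Unset Strict Implicit. Unset Printing Implicit Defensive.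
Import GRing.Theory.
Local Open Scope ring_scope.

Definition laplacian (d : nat) (p : {mpoly R[d]}) : {mpoly R[d]} :=
  \sum_(i < d) (p^`M(i))^`M(i).

Definition harmonic (d : nat) (p : {mpoly R[d]}) : Prop := laplacian p = 0.

Definition fischer (d : nat) (psi : {mpoly R[d]}) (q : {mpoly R[d]}) : {mpoly R[d]} :=
  laplacian (psi * q).

Definition harmonic_divisor (d : nat) (f : {mpoly R[d]}) : Prop :=
  exists q : {mpoly R[d]}, q <> 0 /\ harmonic (f * q).

Definition nonconstant (d : nat) (p : {mpoly R[d]}) : Prop :=
  ~ exists c : R, p = c%:MP.

From mathcomp Require Import all_boot all_algebra.
From mathcomp Require Import Rstruct.
From mathcomp Require Import mpoly.
From Stdlib Require Import Reals Classical.
Set Implicit Arguments. Unset Strict Implicit. Unset Printing Implicit Defensive.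
Local Open Scope ring_scope.
Import GRing.Theory.

(* If psi1 is not a harmonic divisor, the kernel of the linear map F_psi1 is
   trivial, so F_psi1 is injective.  Surjectivity of F_(psi1 psi2) yields q
   with F_psi1 (psi2 q) = F_(psi1 psi2) q = F_psi1 1, hence psi2 q = 1 and
   psi2 is a unit of the polynomial ring, i.e. a constant. *)

Lemma laplacianB (d : nat) (p q : {mpoly R[d]}) :
  laplacian (p - q) = laplacian p - laplacian q.
Proof.
rewrite /laplacian -sumrB; apply: eq_bigr => i _.
by rewrite !mderivB.
Qed.

Lemma fischerB (d : nat) (psi p q : {mpoly R[d]}) :
  fischer psi (p - q) = fischer psi p - fischer psi q.
Proof. by rewrite /fischer mulrBr laplacianB. Qed.

Lemma fischerM (d : nat) (psi1 psi2 q : {mpoly R[d]}) :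
  fischer (psi1 * psi2) q = fischer psi1 (psi2 * q).
Proof. by rewrite /fischer mulrA. Qed.

Lemma fischer_inj (d : nat) (psi : {mpoly R[d]}) :
  ~ harmonic_divisor psi -> injective (fischer psi).
Proof.
move=> not_hd p q eq_pq; apply/eqP; rewrite -subr_eq0; apply/eqP.
apply: NNPP => pq_neq0; apply: not_hd.
by exists (p - q); split; rewrite // /harmonic -/(fischer _ _) fischerB eq_pq subrr.
Qed.

Lemma mul_eq1_mpolyC (n : nat) (K : idomainType) (p q : {mpoly K[n]}) :
  q * p = 1 -> p = (p@_0)%:MP.
Proof. by move/mpoly_intro_unit; rewrite unfold_in => /andP[/eqP]. Qed.

Lemma harmonic_divisor_fischer_surj (d : nat) (psi1 psi2 : {mpoly R[d]}) :
  nonconstant psi2 -> (forall f, exists q, fischer (psi1 * psi2) q = f) ->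
  harmonic_divisor psi1.
Proof.
move=> nc2 surj; apply: NNPP => not_hd1.
have [q] := surj (fischer psi1 1).
rewrite fischerM => /(fischer_inj not_hd1) psi2q1.
by apply: nc2; exists psi2@_0; apply: (@mul_eq1_mpolyC _ _ _ q); rewrite mulrC.
Qed.

Theorem mainTheorem4 (d : nat) (psi psi1 psi2 : {mpoly R[d]}) :
  psi = psi1 * psi2 -> nonconstant psi1 -> nonconstant psi2 ->
  (forall f : {mpoly R[d]}, exists q : {mpoly R[d]}, fischer psi q = f) ->
  harmonic_divisor psi1 /\ harmonic_divisor psi2.
Proof.
move=> -> nc1 nc2 surj; split; first exact: harmonic_divisor_fischer_surj surj.
by apply: harmonic_divisor_fischer_surj nc1 _; rewrite mulrC.
Qed.
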